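(* Let $K\subset\mathbb R^m$ be a smooth cone and $h:\mathbb R^n\to\mathbb R^m$ a continuously differentiable $K$-concave function, and let $S=\{x\in\mathbb R^n: h(x)\in K\}$. Then for all $x,u\in S$ with $h(x)=h(u)=0$, $$\operatorname{Ker} h'(x)^*\cap K^\circ=\operatorname{Ker} h'(u)^*\cap K^\circ.$$
   Context: $h$ is $K$-concave if $h((1-\lambda)x+\lambda y)-[(1-\lambda)h(x)+\lambda h(y)]\in K$ for all $x,y\in\mathbb R^n$, $\lambda\in[0,1]$. $h'(x)^*$ is the adjoint of the Jacobian $h'(x)$, $K^\circ$ the polar cone. A cone is regular if it is pointed, closed, convex, with nonempty interior. A regular cone $C$ is smooth if every boundary point of $C$ lies on an extreme ray of $C$ (a ray $\{\lambda x:\lambda\ge0\}$, $x\ne0$, which is a face of $C$) and, for every non-zero point $x$ of any extreme ray, the normal cone $N_C(x)$ has dimension one. *)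

From HB Require Import structures.
From mathcomp Require Import all_boot all_order all_algebra.
From mathcomp Require Import all_classical all_reals topology normedtype derive.
Set Implicit Arguments. Unset Strict Implicit. Unset Printing Implicit Defensive.
Import Order.TTheory GRing.Theory Num.Theory.
Import numFieldNormedType.Exports.
Local Open Scope classical_set_scope.
Local Open Scope ring_scope.

Section Defs.
Context {R : realType}.

Definition dotv m (u v : 'rV[R]_m) : R := (u *m v^T) 0 0.

Definition is_cone m (C : set 'rV[R]_m) :=
  forall x (l : R), C x -> 0 <= l -> C (l *: x).

Definition convex_setv m (C : set 'rV[R]_m) :=
  forall x y (l : R), C x -> C y -> 0 <= l <= 1 -> C ((1 - l) *: x + l *: y).

Definition pointed m (C : set 'rV[R]_m) :=
  forall x, C x -> C (- x) -> x = 0.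

Definition regular_cone m (C : set 'rV[R]_m) :=
  [/\ is_cone C, pointed C, closed C, convex_setv C & exists x, (interior C) x].

Definition ray m (x : 'rV[R]_m) : set 'rV[R]_m := [set l *: x | l in [set l : R | 0 <= l]].

Definition face m (C F : set 'rV[R]_m) :=
  [/\ F `<=` C, convex_setv F &
      forall a b (t : R), C a -> C b -> 0 < t < 1 ->
        F ((1 - t) *: a + t *: b) -> F a /\ F b].

Definition extreme_ray m (C : set 'rV[R]_m) (x : 'rV[R]_m) :=
  x != 0 /\ face C (ray x).

Definition normal_cone m (C : set 'rV[R]_m) (x : 'rV[R]_m) : set 'rV[R]_m :=
  [set y | forall c, C c -> dotv y (c - x) <= 0].

(* a set containing 0 whose (affine = linear) hull has dimension one:
   it is contained in a line R*y with y a nonzero element of it *)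
Definition dim_one m (N : set 'rV[R]_m) :=
  exists y, [/\ y != 0, N y & forall z, N z -> exists l : R, z = l *: y].

Definition boundary m (C : set 'rV[R]_m) := closure C `\` interior C.

Definition smooth_cone m (C : set 'rV[R]_m) :=
  [/\ regular_cone C,
      (forall x, boundary C x -> exists e, extreme_ray C e /\ ray e x) &
      (forall e x, extreme_ray C e -> ray e x -> x != 0 ->
         dim_one (normal_cone C x))].

Definition polar m (C : set 'rV[R]_m) : set 'rV[R]_m :=
  [set y | forall c, C c -> dotv y c <= 0].

Definition K_concave n m (K : set 'rV[R]_m) (h : 'rV[R]_n -> 'rV[R]_m) :=
  forall x y (l : R), 0 <= l <= 1 ->
    K (h ((1 - l) *: x + l *: y) - ((1 - l) *: h x + l *: h y)).

Definition C1 n m (h : 'rV[R]_n -> 'rV[R]_m) :=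
  (forall x, differentiable h x) /\ continuous (fun x => jacobian h x).

(* kernel of the adjoint of h'(x).  With row vectors, h'(x) v = v *m J where
   J = jacobian h x ('M_(n,m)); its adjoint is y |-> y *m J^T. *)
Definition ker_adj n m (h : 'rV[R]_n -> 'rV[R]_m) (x : 'rV[R]_n) : set 'rV[R]_m :=
  [set y | y *m (jacobian h x)^T = 0].

End Defs.

(* For y in K° the scalar function z |-> <y, h z> is convex, because h is
   K-concave.  If moreover y h'(x) = 0, then x is a critical point, hence a
   global minimum, of this convex function; its minimal value is <y, h x> = 0.
   Any other zero u of h attains this minimum too, so u is also critical,
   i.e. y h'(u) = 0. *)

From mathcomp Require Import all_boot all_order all_algebra.
From mathcomp Require Import all_classical all_reals topology normedtype derive.
From mathcomp Require Import lra.
Import Order.TTheory GRing.Theory Num.Theory.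
Import numFieldNormedType.Exports.
Local Open Scope classical_set_scope.
Local Open Scope ring_scope.

Section InnerProduct.
Context {R : realType} {m : nat}.
Implicit Types y p q : 'rV[R]_m.

Lemma dotvE y p : dotv y p = \sum_(i < m) p 0 i * y 0 i.
Proof. by rewrite /dotv mxE; apply: eq_bigr => i _; rewrite mxE mulrC. Qed.

Lemma dotvD y p q : dotv y (p + q) = dotv y p + dotv y q.
Proof. by rewrite /dotv raddfD /= mulmxDr mxE. Qed.

Lemma dotvN y p : dotv y (- p) = - dotv y p.
Proof. by rewrite /dotv raddfN /= mulmxN mxE. Qed.

Lemma dotvB y p q : dotv y (p - q) = dotv y p - dotv y q.
Proof. by rewrite dotvD dotvN. Qed.

Lemma dotvZ y p (c : R) : dotv y (c *: p) = c * dotv y p.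
Proof. by rewrite /dotv linearZ /= -scalemxAr mxE. Qed.

Lemma dotv_mulmx n y (v : 'rV[R]_n) (J : 'M[R]_(n, m)) :
  dotv y (v *m J) = dotv (y *m J^T) v.
Proof. by rewrite /dotv trmx_mul mulmxA. Qed.

Lemma dotv_eq0 y : (forall p, dotv y p = 0) -> y = 0.
Proof.
move=> y0; apply/rowP => j.
by have := y0 (delta_mx 0 j); rewrite /dotv trmx_delta -colE !mxE.
Qed.

Lemma dotv_continuous y : continuous (dotv y).
Proof.
move=> p; rewrite /continuous_at dotvE; under eq_cvg do rewrite dotvE.
apply: (@cvg_big _ _ _ _ _ add_continuous _ (nbhs p)) => i _.
by apply: cvgM; [exact: coord_continuous | exact: cvg_cst].
Qed.

End InnerProduct.

Section ConvexCriticalPoint.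
Context {R : realType} {V : lmodType R}.
Variable f : V -> R.

Definition convex_funv :=
  forall p q (l : R), 0 <= l <= 1 -> f ((1 - l) *: p + l *: q) <= (1 - l) * f p + l * f q.

Definition diff_quot (a v : V) (t : R) := t^-1 * (f (t *: v + a) - f a).

Lemma diff_quot_le_convex a z t : convex_funv -> 0 < t <= 1 ->
  diff_quot a (z - a) t <= f z - f a.
Proof.
move=> fconv /andP[t0 t1]; rewrite /diff_quot.
have -> : t *: (z - a) + a = (1 - t) *: a + t *: z.
  by rewrite scalerBr scalerBl scale1r addrAC [RHS]addrC addrA.
rewrite ler_pdivrMl // mulrBr.
by have := fconv a z t; rewrite ltW // t1 => /(_ isT); lra.
Qed.

Lemma convex_critical_min a : convex_funv ->
  (forall v, diff_quot a v @ (0 : R)^'+ --> 0) -> forall z, f a <= f z.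
Proof.
move=> fconv fa0 z; rewrite -subr_ge0.
apply: (cvgr_to_le (fa0 (z - a))); near=> t.
apply: diff_quot_le_convex => //; apply/andP; split.
- by near: t; exact: nbhs_right_gt.
- by apply: ltW; near: t; exact: nbhs_right_lt.
Unshelve. all: by end_near.
Qed.

Lemma min_diff_quot_ge0 a v (l : R) : (forall z, f a <= f z) ->
  diff_quot a v @ (0 : R)^'+ --> l -> 0 <= l.
Proof.
move=> amin dl; apply: (cvgr_to_ge dl); near=> t.
have t0 : 0 < t by near: t; exact: nbhs_right_gt.
by rewrite /diff_quot mulr_ge0 // ?invr_ge0 ?subr_ge0 // ltW.
Unshelve. all: by end_near.
Qed.

End ConvexCriticalPoint.

Section ScalarizedMap.
Context {R : realType} {n m : nat}.
Variables (h : 'rV[R]_n -> 'rV[R]_m) (y : 'rV[R]_m).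

Lemma diff_quot_dotv_jacobian a v : differentiable h a ->
  diff_quot (dotv y \o h) a v @ (0 : R)^'+ --> dotv (y *m (jacobian h a)^T) v.
Proof.
move=> dha; rewrite -dotv_mulmx -deriveEjacobian //.
apply: cvg_dnbhs_at_right.
under eq_cvg do rewrite /= -dotvB -dotvZ.
have Dh : (fun t => t^-1 *: (h (t *: v + a) - h a)) @ (0 : R)^' --> 'D_v h a.
  exact: diff_derivable.
exact: cvg_comp Dh (dotv_continuous y _).
Qed.

Lemma convex_dotv_K_concave {K : set 'rV[R]_m} :
  K_concave K h -> polar K y -> convex_funv (dotv y \o h).
Proof.
move=> hconc yK p q l l01; have := yK _ (hconc p q l l01).
by rewrite /= dotvB dotvD !dotvZ subr_le0.
Qed.

End ScalarizedMap.

Lemma ker_adj_polar_sub {R : realType} n m (K : set 'rV[R]_m)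
    (h : 'rV[R]_n -> 'rV[R]_m) a b :
  (forall x, differentiable h x) -> K_concave K h -> h a = 0 -> h b = 0 ->
  ker_adj h a `&` polar K `<=` ker_adj h b `&` polar K.
Proof.
move=> dh hconc ha hb y [ya yK]; split; last exact: yK.
have ya0 : y *m (jacobian h a)^T = 0 := ya.
have fconv := convex_dotv_K_concave h y hconc yK.
have amin : forall z, (dotv y \o h) a <= (dotv y \o h) z.
  apply: convex_critical_min => // v.
  have := diff_quot_dotv_jacobian h y a v (dh a).
  by rewrite ya0 /dotv mul0mx mxE.
have bmin : forall z, (dotv y \o h) b <= (dotv y \o h) z by rewrite /= hb -ha.
have jb_ge0 v : 0 <= dotv (y *m (jacobian h b)^T) v.
  exact: min_diff_quot_ge0 bmin (diff_quot_dotv_jacobian h y b v (dh b)).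
apply: dotv_eq0 => v; apply/eqP; rewrite eq_le jb_ge0 andbT.
by have := jb_ge0 (- v); rewrite dotvN oppr_ge0.
Qed.

Theorem lemma1 (R : realType) (n m : nat) (K : set 'rV[R]_m)
  (h : 'rV[R]_n -> 'rV[R]_m) :
  smooth_cone K -> C1 h -> K_concave K h ->
  let S := [set x | K (h x)] in
  forall x u, S x -> S u -> h x = 0 -> h u = 0 ->
    ker_adj h x `&` polar K = ker_adj h u `&` polar K.
Proof.
move=> _ [dh _] hconc S x u _ _ hx hu.
by apply/seteqP; split; exact: ker_adj_polar_sub.
Qed.
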